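(* For arbitrary qubit density matrices $\rho,\sigma$ (i.e. positive semidefinite $2\times 2$ complex matrices of unit trace), $$\frac{\operatorname{tr}(\rho\sigma)}{\max[\operatorname{tr}(\rho^{2}),\operatorname{tr}(\sigma^{2})]}\;\le\;\left(\operatorname{tr}\sqrt{\sqrt{\rho}\,\sigma\sqrt{\rho}}\right)^{2},$$ i.e. $\mathcal{F}_2(\rho,\sigma)\le\mathcal{F}_1(\rho,\sigma)$.
   Context: $\mathcal{F}_2(\rho,\sigma)=\operatorname{tr}(\rho\sigma)/\max[\operatorname{tr}(\rho^2),\operatorname{tr}(\sigma^2)]$ is the Hilbert–Schmidt fidelity and $\mathcal{F}_1(\rho,\sigma)=(\operatorname{tr}\sqrt{\sqrt{\rho}\sigma\sqrt{\rho}})^2$ is the Uhlmann–Jozsa fidelity; square roots of positive semidefinite matrices are the positive semidefinite square roots. *)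

From HB Require Import structures.
From mathcomp Require Import all_boot all_order all_algebra.
From mathcomp Require Import complex.
From Stdlib Require Import ClassicalEpsilon.
Set Implicit Arguments. Unset Strict Implicit. Unset Printing Implicit Defensive.
Import Order.TTheory GRing.Theory Num.Theory.
Local Open Scope ring_scope.

Definition adjmx (C : numClosedFieldType) m n (A : 'M[C]_(m, n)) : 'M[C]_(n, m) :=
  map_mx Num.conj (A^T).

(* positive semidefinite: Hermitian with nonnegative quadratic form
   (0 <= z in a numClosedField means z is real and nonnegative) *)
Definition psdmx (C : numClosedFieldType) n (A : 'M[C]_n) : Prop :=
  adjmx A = A /\ forall v : 'cV[C]_n, 0 <= (adjmx v *m A *m v) 0 0.

Definition density (C : numClosedFieldType) n (A : 'M[C]_n) : Prop :=
  psdmx A /\ \tr A = 1.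

(* the positive semidefinite square root (chosen by Hilbert's epsilon among
   the PSD matrices B with B * B = A; it exists and is unique when A is PSD) *)
Definition sqrtm (C : numClosedFieldType) n (A : 'M[C]_n) : 'M[C]_n :=
  epsilon (inhabits 0) (fun B : 'M[C]_n => psdmx B /\ B *m B = A).

Definition fid1 (C : numClosedFieldType) n (rho sigma : 'M[C]_n) : C :=
  (\tr (sqrtm (sqrtm rho *m sigma *m sqrtm rho))) ^+ 2.

(* Hilbert-Schmidt fidelity: tr(rho sigma) / max[tr rho^2, tr sigma^2];
   the purities are real, the max is taken of their real parts *)
Definition fid2 (R : rcfType) n (rho sigma : 'M[R[i]]_n) : R[i] :=
  \tr (rho *m sigma) /
    (Num.max (complex.Re (\tr (rho *m rho))) (complex.Re (\tr (sigma *m sigma))))%:C%C.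

From mathcomp Require Import all_boot all_order all_algebra.
From mathcomp Require Import complex ring lra.
From Stdlib Require Import ClassicalEpsilon.
Import Order.TTheory GRing.Theory Num.Theory.
Set Implicit Arguments. Unset Strict Implicit. Unset Printing Implicit Defensive.
Local Open Scope ring_scope.

(* For 2 x 2 matrices Cayley-Hamilton gives (tr B)^2 = tr (B^2) + 2 det B.  It shows
   that (A + sqrt (det A)) / sqrt (tr A + 2 sqrt (det A)) is a PSD square root of a
   PSD matrix A, and, applied to B = sqrt (sqrt rho sigma sqrt rho), that
   F1 = tr (rho sigma) + 2 sqrt (det rho det sigma).  For density matrices
   tr (rho^2) = 1 - 2 det rho, and 0 <= tr ((rho - sigma)^2) gives
   tr (rho sigma) + det rho + det sigma <= 1.  Hence the larger purity is
   m = 1 - 2 min (det rho, det sigma) >= tr (rho sigma), and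
   F2 - tr (rho sigma) = tr (rho sigma) (1 - m) / m <= 1 - m
   = 2 min (det rho, det sigma) <= 2 sqrt (det rho det sigma). *)

Lemma ord2P (i : 'I_2) : i = 0 \/ i = 1.
Proof. by case: i => [[|[|//]]] lt_i2; [left | right]; exact: val_inj. Qed.

Section Matrix2.
Variable T : comNzRingType.
Implicit Types A B : 'M[T]_2.

Lemma lift0_ord2 : lift ord0 ord0 = 1 :> 'I_2.
Proof. exact: val_inj. Qed.

Lemma mxtrace2 A : \tr A = A 0 0 + A 1 1.
Proof. by rewrite /mxtrace !big_ord_recl big_ord0 addr0 lift0_ord2. Qed.

Lemma mulmx2E m n (A : 'M[T]_(m, 2)) (B : 'M[T]_(2, n)) i j :
  (A *m B) i j = A i 0 * B 0 j + A i 1 * B 1 j.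
Proof. by rewrite !mxE !big_ord_recl big_ord0 addr0 lift0_ord2. Qed.

Lemma matrix2P A B :
  A 0 0 = B 0 0 -> A 0 1 = B 0 1 -> A 1 0 = B 1 0 -> A 1 1 = B 1 1 -> A = B.
Proof.
move=> e00 e01 e10 e11; apply/matrixP => i j.
by case: (ord2P i) => ->; case: (ord2P j) => ->.
Qed.

Lemma det_mx2 A : \det A = A 0 0 * A 1 1 - A 0 1 * A 1 0.
Proof.
rewrite (expand_det_row _ 0) !big_ord_recl big_ord0 /cofactor /= !det_mx11 !mxE /=.
rewrite lift0_ord2; have -> : lift 1 ord0 = 0 :> 'I_2 by exact: val_inj.
by rewrite expr0 expr1; ring.
Qed.

Lemma Cayley_Hamilton2 A : A *m A = \tr A *: A - (\det A)%:M.
Proof. by apply: matrix2P; rewrite !mulmx2E !mxE mxtrace2 det_mx2 /=; ring. Qed.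

Lemma sqr_mxtrace2 A : \tr A ^+ 2 = \tr (A *m A) + 2 * \det A.
Proof. by rewrite !mxtrace2 !mulmx2E det_mx2; ring. Qed.

Lemma sqr_add_scalar_mx2 A s : s ^+ 2 = \det A ->
  (A + s%:M) *m (A + s%:M) = (\tr A + 2 * s) *: A.
Proof.
move=> s2; rewrite mulmxDl !mulmxDr Cayley_Hamilton2 -s2 mul_mx_scalar mul_scalar_mx.
rewrite -scalar_mxM -expr2 scalerDl mulr_natl -scalerMnl mulr2n.
by rewrite [_ + (s ^+ 2)%:M]addrC addrACA subrK.
Qed.

End Matrix2.

Section PositiveSemidefinite.
Variable C : numClosedFieldType.

Lemma adjmxE m n (A : 'M[C]_(m, n)) i j : adjmx A i j = (A j i)^*.
Proof. by rewrite !mxE. Qed.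

Lemma adjmxM m n p (A : 'M[C]_(m, n)) (B : 'M[C]_(n, p)) :
  adjmx (A *m B) = adjmx B *m adjmx A.
Proof. by rewrite /adjmx trmx_mul map_mxM. Qed.

Lemma adjmxD m n (A B : 'M[C]_(m, n)) : adjmx (A + B) = adjmx A + adjmx B.
Proof. by apply/matrixP => i j; rewrite !mxE rmorphD. Qed.

Lemma adjmxZ m n c (A : 'M[C]_(m, n)) : adjmx (c *: A) = c^* *: adjmx A.
Proof. by apply/matrixP => i j; rewrite !mxE rmorphM. Qed.

Lemma adjmxB m n (A B : 'M[C]_(m, n)) : adjmx (A - B) = adjmx A - adjmx B.
Proof. by apply/matrixP => i j; rewrite !mxE rmorphB. Qed.

Lemma adjmx_delta n (i : 'I_n) : adjmx (delta_mx i 0 : 'cV[C]_n) = delta_mx 0 i.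
Proof. by apply/matrixP => k l; rewrite !mxE rmorph_nat andbC. Qed.

Lemma mxtrace_adj_mul_ge0 m n (A : 'M[C]_(m, n)) : 0 <= \tr (adjmx A *m A).
Proof.
apply: sumr_ge0 => i _; rewrite mxE; apply: sumr_ge0 => j _.
by rewrite adjmxE mulrC mul_conjC_ge0.
Qed.

Lemma psdmx_hermitian n (A : 'M[C]_n) i j : psdmx A -> (A i j)^* = A j i.
Proof. by case=> + _ => /matrixP/(_ j i); rewrite adjmxE. Qed.

Lemma psdmx_diag_ge0 n (A : 'M[C]_n) i : psdmx A -> 0 <= A i i.
Proof. by case=> _ /(_ (delta_mx i 0)); rewrite adjmx_delta -rowE -colE !mxE. Qed.

Lemma mxtrace_psd_ge0 n (A : 'M[C]_n) : psdmx A -> 0 <= \tr A.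
Proof. by move=> psdA; apply: sumr_ge0 => i _; exact: psdmx_diag_ge0. Qed.

Lemma psdmxD n (A B : 'M[C]_n) : psdmx A -> psdmx B -> psdmx (A + B).
Proof.
case=> hA qA [hB qB]; split; first by rewrite adjmxD hA hB.
by move=> v; rewrite mulmxDr mulmxDl mxE addr_ge0.
Qed.

Lemma psdmxZ n (c : C) (A : 'M[C]_n) : 0 <= c -> psdmx A -> psdmx (c *: A).
Proof.
move=> c_ge0 [hA qA]; split; first by rewrite adjmxZ hA geC0_conj.
by move=> v; rewrite -scalemxAr -scalemxAl mxE mulr_ge0.
Qed.

Lemma psdmx_scalar n (c : C) : 0 <= c -> psdmx (c%:M : 'M[C]_n).
Proof.
move=> c_ge0; split.
  by apply/matrixP => i j; rewrite !mxE rmorphMn /= (geC0_conj c_ge0) eq_sym.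
move=> v; rewrite mul_mx_scalar -scalemxAl mxE mulr_ge0 //.
by rewrite -trace_mx11 mxtrace_adj_mul_ge0.
Qed.

Lemma psdmx_conj n (S P : 'M[C]_n) : adjmx S = S -> psdmx P -> psdmx (S *m P *m S).
Proof.
move=> hS [hP qP]; split; first by rewrite !adjmxM hS hP mulmxA.
move=> v; have -> : adjmx v *m (S *m P *m S) *m v = adjmx (S *m v) *m P *m (S *m v).
  by rewrite adjmxM hS !mulmxA.
exact: qP.
Qed.

Lemma sqrtm_spec n (A : 'M[C]_n) : (exists B, psdmx B /\ B *m B = A) ->
  psdmx (sqrtm A) /\ sqrtm A *m sqrtm A = A.
Proof. exact: epsilon_spec. Qed.

End PositiveSemidefinite.

Section PositiveSemidefinite2.
Variable C : numClosedFieldType.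
Implicit Types A : 'M[C]_2.

Lemma qform2 A (v : 'cV[C]_2) : (adjmx v *m A *m v) 0 0 =
  (v 0 0)^* * (A 0 0 * v 0 0 + A 0 1 * v 1 0) +
  (v 1 0)^* * (A 1 0 * v 0 0 + A 1 1 * v 1 0).
Proof. by rewrite -mulmxA !mulmx2E !adjmxE. Qed.

Lemma psdmx2_det_ge0 A : psdmx A -> 0 <= \det A.
Proof.
move=> psdA; have a_ge0 := psdmx_diag_ge0 0 psdA; have d_ge0 := psdmx_diag_ge0 1 psdA.
have A10 : A 1 0 = (A 0 1)^* by rewrite psdmx_hermitian.
have qv x y r :
    x^* * (A 0 0 * x + A 0 1 * y) + y^* * (A 1 0 * x + A 1 1 * y) = r -> 0 <= r.
  by move=> <-; have := psdA.2 (\col_i [:: x; y]`_i); rewrite qform2 !mxE.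
(* The quadratic forms of the test vectors below are 2 det A (when the diagonal
   vanishes), A 0 0 * det A and A 1 1 * det A. *)
have [/eqP | trA_neq0] := eqVneq (A 0 0 + A 1 1) 0.
  rewrite paddr_eq0 // => /andP[/eqP a0 /eqP d0].
  rewrite -(pmulr_rge0 _ (ltr0Sn _ 1)); apply: (qv 1 (- (A 0 1)^*)).
  by rewrite rmorph1 rmorphN /= conjCK det_mx2 A10 a0 d0; ring.
have : 0 < A 0 0 + A 1 1 by rewrite lt_def trA_neq0 addr_ge0.
move/pmulr_rge0 <-; rewrite mulrDl addr_ge0 //.
  apply: (qv (- A 0 1) (A 0 0)).
  by rewrite rmorphN /= (geC0_conj a_ge0) det_mx2 A10; ring.
apply: (qv (A 1 1) (- (A 0 1)^*)).
by rewrite rmorphN /= conjCK (geC0_conj d_ge0) det_mx2 A10; ring.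
Qed.

Lemma psdmx2_sqrt A : psdmx A -> exists B, psdmx B /\ B *m B = A.
Proof.
move=> psdA; set s := sqrtC (\det A); set tau := \tr A + 2 * s.
have s_ge0 : 0 <= s by rewrite sqrtC_ge0 psdmx2_det_ge0.
have s2 : s ^+ 2 = \det A by exact: sqrtCK.
have tau_ge0 : 0 <= tau by rewrite addr_ge0 ?mxtrace_psd_ge0 ?mulr_ge0 ?ler0n.
have [/eqP | tau_neq0] := eqVneq tau 0.
  rewrite paddr_eq0 ?mxtrace_psd_ge0 ?mulr_ge0 ?ler0n // mulf_eq0 pnatr_eq0 /=.
  move=> /andP[trA0 /eqP s0].
  move: trA0; rewrite mxtrace2 paddr_eq0 ?psdmx_diag_ge0 // => /andP[/eqP a0 /eqP d0].
  have A10 : A 1 0 = (A 0 1)^* by rewrite psdmx_hermitian.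
  move: s2; rewrite s0 expr0n det_mx2 a0 d0 mul0r sub0r A10 => /eqP.
  rewrite eq_sym oppr_eq0 mul_conjC_eq0 => /eqP b0.
  exists 0%:M; split; first exact: psdmx_scalar.
  by apply: matrix2P; rewrite mul_scalar_mx scale0r !mxE ?a0 ?d0 ?A10 ?b0 ?rmorph0.
set t := sqrtC tau; have t_neq0 : t != 0 by rewrite sqrtC_eq0.
exists (t^-1 *: (A + s%:M)); split.
  apply: psdmxZ; first by rewrite invr_ge0 sqrtC_ge0.
  exact: psdmxD psdA (psdmx_scalar _ s_ge0).
rewrite -scalemxAl -scalemxAr scalerA sqr_add_scalar_mx2 // -/tau scalerA.
by rewrite -(sqrtCK tau) -/t -expr2 -exprMn mulVf // expr1n scale1r.
Qed.

Lemma fid1_mx2 (rho sigma : 'M[C]_2) : psdmx rho -> psdmx sigma ->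
  fid1 rho sigma = \tr (rho *m sigma) + 2 * sqrtC (\det rho * \det sigma).
Proof.
move=> psd_rho psd_sigma.
have [psdS SS] := sqrtm_spec (psdmx2_sqrt psd_rho).
set S := sqrtm rho in psdS SS *.
have [psdB BB] := sqrtm_spec (psdmx2_sqrt (psdmx_conj psdS.1 psd_sigma)).
rewrite /fid1 -/S sqr_mxtrace2 BB -(sqrCK (psdmx2_det_ge0 psdB)) expr2 -det_mulmx BB.
congr (_ + 2 * sqrtC _); first by rewrite mxtrace_mulC mulmxA SS.
by rewrite -SS !det_mulmx mulrAC.
Qed.

Lemma mxtrace2_mul_psd_ge0 (rho sigma : 'M[C]_2) :
  psdmx rho -> psdmx sigma -> 0 <= \tr (rho *m sigma).
Proof.
move=> psd_rho psd_sigma; have [psdS SS] := sqrtm_spec (psdmx2_sqrt psd_rho).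
rewrite -SS -mulmxA mxtrace_mulC.
by apply/mxtrace_psd_ge0/psdmx_conj; first exact: psdS.1.
Qed.

Lemma density2_purity (rho : 'M[C]_2) :
  density rho -> \tr (rho *m rho) = 1 - 2 * \det rho.
Proof. by case=> _ tr1; apply/eqP; rewrite eq_sym subr_eq -sqr_mxtrace2 tr1 expr1n. Qed.

Lemma density2_overlap_le (rho sigma : 'M[C]_2) : density rho -> density sigma ->
  \tr (rho *m sigma) + \det rho + \det sigma <= 1.
Proof.
move=> dens_rho dens_sigma; rewrite -subr_ge0 -(pmulr_rge0 _ (ltr0Sn _ 1)).
have -> : 2 * (1 - (\tr (rho *m sigma) + \det rho + \det sigma)) =
    \tr (adjmx (rho - sigma) *m (rho - sigma)).
  rewrite adjmxB dens_rho.1.1 dens_sigma.1.1 mulmxBl !mulmxBr !raddfB /=.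
  by rewrite (mxtrace_mulC sigma) !density2_purity //; ring.
exact: mxtrace_adj_mul_ge0.
Qed.

End PositiveSemidefinite2.

Lemma complex_ge0P (R : rcfType) (z : R[i]) :
  0 <= z -> exists2 r : R, 0 <= r & z = r%:C%C.
Proof. by move=> z_ge0; exists (complex.Re z); rewrite -?ler0c RRe_real ?ger0_real. Qed.

Lemma sqrtC_realc (R : rcfType) (r : R) : 0 <= r -> sqrtC r%:C%C = (Num.sqrt r)%:C%C.
Proof.
by move=> r_ge0; rewrite -[r in LHS]sqr_sqrtr // rmorphXn sqrCK // ler0c sqrtr_ge0.
Qed.
Lemma ler_div_max_purity (R : rcfType) (p x y : R) :
  0 <= x -> 0 <= y -> 0 <= p -> p + x + y <= 1 ->
  p / Num.max (1 - 2 * x) (1 - 2 * y) <= p + 2 * Num.sqrt (x * y).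
Proof.
wlog le_xy : x y / x <= y.
  move=> hw x0 y0 p0 hp; have [le_xy|/ltW le_yx] := leP x y; first exact: hw.
  by rewrite maxC (mulrC x y); apply: hw; rewrite // addrAC.
move=> x0 y0 p0 hp.
have -> : Num.max (1 - 2 * x) (1 - 2 * y) = 1 - 2 * x by apply/max_idPl; lra.
have x_le_sqrt : x <= Num.sqrt (x * y).
  by rewrite -[x in x <= _]ger0_norm // -sqrtr_sqr ler_wsqrtr // expr2 ler_wpM2l.
have [m_le0 | m_gt0] := leP (1 - 2 * x) 0.
  apply: (@le_trans _ _ 0); first by rewrite mulr_ge0_le0 // invr_le0.
  by rewrite addr_ge0 // mulr_ge0 // sqrtr_ge0.
rewrite ler_pdivrMr //; nra.
Qed.

Theorem corollary1 (R : rcfType) (rho sigma : 'M[R[i]]_2) :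
  density rho -> density sigma ->
  fid2 rho sigma <= fid1 rho sigma.
Proof.
move=> dens_rho dens_sigma; have [[psd_rho _] [psd_sigma _]] := (dens_rho, dens_sigma).
have := density2_overlap_le dens_rho dens_sigma.
rewrite /fid2 fid1_mx2 // !density2_purity //.
have [p p_ge0 ->] := complex_ge0P (mxtrace2_mul_psd_ge0 psd_rho psd_sigma).
have [x x_ge0 ->] := complex_ge0P (psdmx2_det_ge0 psd_rho).
have [y y_ge0 ->] := complex_ge0P (psdmx2_det_ge0 psd_sigma).
have Re_purity (r : R) : complex.Re (1 - 2 * r%:C%C) = 1 - 2 * r by simpc.
rewrite !Re_purity -rmorphM sqrtC_realc ?mulr_ge0 //.
rewrite -!rmorphD -(rmorph1 (real_complex R)) lecR.
rewrite -fmorph_div -(rmorph_nat (real_complex R) 2) -rmorphM -rmorphD lecR.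
exact: ler_div_max_purity.
Qed.
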